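(* Let $E$ be a disjunctive interval multiplicity expression (DIME) over a finite alphabet $\Sigma$ and let $w$ be an unordered word over $\Sigma$. Then $w\in L(E)$ if and only if $w\models \Delta_E$.
   Context: Unordered words are functions $w:\Sigma\to\mathbb{N}_0$; $a\in w$ means $w(a)\neq 0$; $\varepsilon$ is the all-zero word; unordered concatenation $\uplus$ is multiset union, extended to languages pointwise. An interval is $[n,m]$ or $[n,m]^?$ with $n\in\mathbb{N}_0$, $m\in\mathbb{N}_0\cup\{\infty\}$; $L(E^{[n,m]})=\{w_1\uplus\dots\uplus w_i\mid n\le i\le m, w_j\in L(E)\}$, $L(E^{[n,m]^?})=L(E^{[n,m]})\cup\{\varepsilon\}$; the multiplicities $*,+,?,1$ denote $[0,\infty],[1,\infty],[0,1],[1,1]$. Also $L(a)=\{a\}$, $L(E_1\mid E_2)=L(E_1)\cup L(E_2)$, $L(E_1\mathbin{|\hspace{-0.1em}|} E_2)=L(E_1)\uplus L(E_2)$. An atom is $(a_1^{I_1}\mathbin{|\hspace{-0.1em}|}\dots\mathbin{|\hspace{-0.1em}|} a_k^{I_k})$ with $a_i\in\Sigma$ and each $I_i\in\{?,1\}$. A clause is $(A_1^{I_1}\mid\dots\mid A_k^{I_k})$ with atoms $A_i$ and intervals $I_i$; it is simple if each $I_i\in\{?,1\}$. A DIME is $(D_1^{I_1}\mathbin{|\hspace{-0.1em}|}\dots\mathbin{|\hspace{-0.1em}|} D_k^{I_k})$ where for each $i$ either $D_i$ is a simple clause and $I_i\in\{+,*\}$, or $D_i$ is a clause and $I_i\in\{1,?\}$;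 moreover each symbol of $\Sigma$ occurs at most once in the DIME. The characterizing tuple of $E$ is $\Delta_E=(C_E,N_E,P_E,K_E)$ where $C_E=\{(a,b)\in\Sigma\times\Sigma\mid \neg\exists w\in L(E).\ a\in w\wedge b\in w\}$, $N_E=\{(a,w(a))\mid a\in\Sigma, w\in L(E)\}$, $P_E=\{X\subseteq\Sigma\mid\forall w\in L(E).\ \exists a\in X.\ a\in w\}$, $K_E=\{(a,b)\in\Sigma\times\Sigma\mid\forall w\in L(E).\ w(a)\ge w(b)\}$. An unordered word $w$ satisfies $\Delta_E$, written $w\models\Delta_E$, if: (1) for all $(a,b)\in C_E$, not both $a\in w$ and $b\in w$; (2) for all $a\in\Sigma$, $(a,w(a))\in N_E$; (3) for all $X\in P_E$ there is $a\in X$ with $a\in w$; (4) for all $(a,b)\in K_E$, $w(a)\ge w(b)$. *)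

From Stdlib Require List.
From mathcomp Require Import all_boot.

Set Implicit Arguments.
Unset Strict Implicit.
Unset Printing Implicit Defensive.

Section DIME.
Variable Sigma : finType.

(* unordered words: functions Sigma -> N_0 *)
Definition word := {ffun Sigma -> nat}.
Definition eps : word := [ffun _ => 0].
Definition uconc (w1 w2 : word) : word := [ffun a => w1 a + w2 a].
Definition occurs (a : Sigma) (w : word) : Prop := w a <> 0.

Definition lang := word -> Prop.
Definition L_sym (a : Sigma) : lang := fun w => w = [ffun x => nat_of_bool (x == a)].
Definition L_union (L1 L2 : lang) : lang := fun w => L1 w \/ L2 w.
Definition L_conc (L1 L2 : lang) : lang :=
  fun w => exists w1 w2, L1 w1 /\ L2 w2 /\ w = uconc w1 w2.
Definition L_empty : lang := fun _ => False.
Definition L_eps : lang := fun w => w = eps.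
Fixpoint L_pow (L : lang) (n : nat) : lang :=
  match n with 0 => L_eps | n'.+1 => L_conc L (L_pow L n') end.

(* intervals [n,m] (opt = false) and [n,m]^? (opt = true); hi = None is infinity *)
Record interval := Itv { itv_lo : nat; itv_hi : option nat; itv_opt : bool }.
Definition in_range (I : interval) (i : nat) : Prop :=
  itv_lo I <= i /\ match itv_hi I with Some m => i <= m | None => True end.
Definition itv_wf (I : interval) : Prop :=
  match itv_hi I with Some m => itv_lo I <= m | None => True end.
Definition L_rep (L : lang) (I : interval) : lang :=
  fun w => (exists i, in_range I i /\ L_pow L i w) \/ (itv_opt I /\ w = eps).

Definition m_star := Itv 0 None false.
Definition m_plus := Itv 1 None false.
Definition m_opt  := Itv 0 (Some 1) false.
Definition m_one  := Itv 1 (Some 1) false.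

(* atom (a_1^{I_1} || ... || a_k^{I_k}) *)
Definition atom := seq (Sigma * interval).
(* clause (A_1^{I_1} | ... | A_k^{I_k}) *)
Definition clause := seq (atom * interval).
(* expression (D_1^{I_1} || ... || D_k^{I_k}) *)
Definition dime := seq (clause * interval).

Definition L_atom (A : atom) : lang :=
  foldr (fun p acc => L_conc (L_rep (L_sym p.1) p.2) acc) L_eps A.
Definition L_clause (C : clause) : lang :=
  foldr (fun p acc => L_union (L_rep (L_atom p.1) p.2) acc) L_empty C.
Definition L_dime (E : dime) : lang :=
  foldr (fun p acc => L_conc (L_rep (L_clause p.1) p.2) acc) L_eps E.

Definition is_atom (A : atom) : Prop :=
  A <> [::] /\ forall p, List.In p A -> p.2 = m_opt \/ p.2 = m_one.
Definition is_clause (C : clause) : Prop :=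
  C <> [::] /\ forall p, List.In p C -> is_atom p.1 /\ itv_wf p.2.
Definition is_simple_clause (C : clause) : Prop :=
  is_clause C /\ forall p, List.In p C -> p.2 = m_opt \/ p.2 = m_one.
Definition dime_symbols (E : dime) : seq Sigma :=
  flatten [seq flatten [seq [seq q.1 | q <- A.1] | A <- D.1] | D <- E].
Definition is_dime (E : dime) : Prop :=
  [/\ E <> [::],
      (forall p, List.In p E ->
         (is_simple_clause p.1 /\ (p.2 = m_plus \/ p.2 = m_star)) \/
         (is_clause p.1 /\ (p.2 = m_one \/ p.2 = m_opt)))
    & uniq (dime_symbols E)].

Record char_tuple := CharTuple {
  ct_C : Sigma -> Sigma -> Prop;
  ct_N : Sigma -> nat -> Prop;
  ct_P : {set Sigma} -> Prop;
  ct_K : Sigma -> Sigma -> Prop }.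

Definition Delta (L : lang) : char_tuple := CharTuple
  (fun a b => ~ exists w, L w /\ occurs a w /\ occurs b w)
  (fun a n => exists w, L w /\ w a = n)
  (fun X => forall w, L w -> exists2 a, a \in X & occurs a w)
  (fun a b => forall w, L w -> w b <= w a).

Definition models (w : word) (D : char_tuple) : Prop :=
  [/\ (forall a b, ct_C D a b -> ~ (occurs a w /\ occurs b w)),
      (forall a, ct_N D a (w a)),
      (forall X, ct_P D X -> exists2 a, a \in X & occurs a w)
    & (forall a b, ct_K D a b -> w b <= w a)].

End DIME.

From mathcomp Require Import all_boot zify.
From Stdlib Require Import Classical.
From Stdlib Require List.

Unset Printing Implicit Defensive.

(* For completeness, a DIME is a product of clause
   languages over pairwise disjoint alphabets, and such a product is
   characterized as soon as its factors are: restricting a model of Delta to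
   one alphabet gives a model of the factor's Delta. For a clause under 1 or ?,
   the conflict pairs confine a nonempty model w to a single atom, the
   implications force the mandatory symbols of that atom to carry its maximal
   count, and the multiplicity sets, taken at such a symbol, supply an exponent
   allowed by the interval. For a simple clause under + or *, the support
   condition and the implications already make the restriction of w to each
   atom a power of that atom, the exponent being its maximal count. *)

Definition opt_or_one {T : Type} (s : seq (T * interval)) :=
  forall p, List.In p s -> p.2 = m_opt \/ p.2 = m_one.

Section Characterization.
Variable S : finType.
Implicit Types (w u v : word S) (L : lang S) (P : pred S) (I : interval)
  (A : atom S) (C : clause S) (E : dime S).

Lemma epsE a : eps S a = 0.
Proof. by rewrite ffunE. Qed.

Lemma uconcE u v a : uconc u v a = u a + v a.
Proof. by rewrite ffunE. Qed.

Lemma uconc0w w : uconc (eps S) w = w.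
Proof. by apply/ffunP => a; rewrite uconcE epsE. Qed.

Lemma uconcw0 w : uconc w (eps S) = w.
Proof. by apply/ffunP => a; rewrite uconcE epsE addn0. Qed.

Lemma uconcA u v w : uconc u (uconc v w) = uconc (uconc u v) w.
Proof. by apply/ffunP => a; rewrite !uconcE addnA. Qed.

Lemma word_neq_eps w : w != eps S -> exists a, occurs a w.
Proof.
move=> /eqP wN0; case: (pickP (fun a => w a != 0)) => [a /eqP|w0]; first by exists a.
by case: wN0; apply/ffunP => a; rewrite epsE; apply/eqP/negbFE/w0.
Qed.

Definition restr P w : word S := [ffun a => if P a then w a else 0].

Lemma restrE P w a : restr P w a = if P a then w a else 0.
Proof. by rewrite ffunE. Qed.

Lemma uconc_restrC P w : uconc (restr P w) (restr (predC P) w) = w.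
Proof. by apply/ffunP => a; rewrite uconcE !restrE /=; case: (P a); rewrite ?addn0. Qed.

Lemma L_pow1 L w : L_pow L 1 w <-> L w.
Proof.
split; first by move=> [w1 [w2 [Lw1 [-> ->]]]]; rewrite uconcw0.
by move=> Lw; exists w, (eps S); rewrite uconcw0.
Qed.

Lemma L_pow_add {L m n u v} :
  L_pow L m u -> L_pow L n v -> L_pow L (m + n) (uconc u v).
Proof.
elim: m u => [|m IHm] u /=; first by move=> -> Lv; rewrite uconc0w.
move=> [u1 [u2 [Lu1 [Lu2 ->]]]] Lv; exists u1, (uconc u2 v).
by rewrite uconcA; split; last split; [|exact: IHm|].
Qed.

Lemma sub_L_pow {L L' n w} :
  (forall v, L v -> L' v) -> L_pow L n w -> L_pow L' n w.
Proof.
move=> sLL'; elim: n w => //= n IHn w [w1 [w2 [Lw1 [Lw2 ->]]]].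
by exists w1, w2; split; last split; [exact: sLL'|exact: IHn|].
Qed.

Definition irange I i := in_range I i \/ (itv_opt I /\ i = 0).

Lemma L_repE L I w : L_rep L I w <-> exists2 i, irange I i & L_pow L i w.
Proof.
split; first by move=> [[i [Ii Lw]]|[oI ->]]; [exists i; first left|exists 0; first right].
by move=> [i [Ii|[oI ->]] Lw]; [left; exists i|right].
Qed.

Lemma L_rep_one L w : L_rep L m_one w <-> L w.
Proof.
rewrite L_repE -L_pow1; split; last by exists 1 => //; left.
by move=> [i [[/= lo hi]|[//]]]; have -> : i = 1 by lia.
Qed.

Lemma L_rep_opt L w : L_rep L m_opt w <-> w = eps S \/ L w.
Proof.
rewrite L_repE; split.
  move=> [i [[/= _ hi]|[//]]]; case: i hi => [|[|i]] // _; first by left.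
  by move/L_pow1; right.
by move=> [->|/L_pow1 Lw]; [exists 0|exists 1] => //; left.
Qed.

Definition supported P L := forall w, L w -> forall a, ~~ P a -> w a = 0.

Lemma supported_eps P : supported P (@L_eps S).
Proof. by move=> w -> a _; rewrite epsE. Qed.

Lemma supported_conc {P L1 L2} :
  supported P L1 -> supported P L2 -> supported P (L_conc L1 L2).
Proof.
move=> sL1 sL2 w [w1 [w2 [Lw1 [Lw2 ->]]]] a Pa.
by rewrite uconcE (sL1 _ Lw1) ?(sL2 _ Lw2).
Qed.

Lemma supported_rep {P L} I : supported P L -> supported P (L_rep L I).
Proof.
move=> sL w /L_repE [i _]; elim: i w => [|i IHi] w /=; first exact: supported_eps.
by apply: supported_conc.
Qed.

Lemma supported_sub {P Q L} : supported P L -> subpred P Q -> supported Q L.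
Proof. by move=> sL sPQ w Lw a Qa; apply: (sL w Lw); apply: contra Qa; apply: sPQ. Qed.

Lemma L_conc_restr {P L1 L2} w :
  supported P L1 -> supported (predC P) L2 ->
  L_conc L1 L2 w <-> L1 (restr P w) /\ L2 (restr (predC P) w).
Proof.
move=> sL1 sL2; split=> [[w1 [w2 [Lw1 [Lw2 ->]]]]|[L1w L2w]]; last first.
  by exists (restr P w), (restr (predC P) w); rewrite uconc_restrC.
have -> : restr P (uconc w1 w2) = w1.
  apply/ffunP => a; rewrite restrE uconcE.
  by case: (boolP (P a)) => Pa; rewrite ?(sL1 _ Lw1 a Pa) // (sL2 _ Lw2) ?negbK ?addn0.
have -> // : restr (predC P) (uconc w1 w2) = w2.
apply/ffunP => a; rewrite restrE uconcE /=.
by case: (boolP (P a)) => Pa /=; rewrite ?(sL1 _ Lw1 a Pa) // (sL2 _ Lw2) ?negbK.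
Qed.

Definition characterized L := forall w, models w (Delta L) -> L w.

Lemma models_Delta L w : L w -> models w (Delta L).
Proof.
move=> Lw; split => /= [a b nab ab|a|X|a b].
- by apply: nab; exists w.
- by exists w.
- exact.
- exact.
Qed.

(* If eps is not in L, every word of L meets the whole alphabet. *)
Lemma models_Delta_eps L : models (eps S) (Delta L) -> L (eps S).
Proof.
move=> [_ _ HP _]; apply: NNPP => Leps.
have [a _] : exists2 a, a \in [set: S] & occurs a (eps S).
  apply: HP => v Lv; have /word_neq_eps [a va] : v != eps S.
    by apply: contraPneq Leps => <-.
  by exists a; rewrite ?inE.
by rewrite /occurs epsE.
Qed.

Lemma models_Delta_restr L L1 P w :
  (forall v, L v -> L1 (restr P v)) ->
  models w (Delta L) -> models (restr P w) (Delta L1).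
Proof.
move=> LL1 [HC HN HP HK]; split => /=.
- move=> a b nab; rewrite /occurs !restrE.
  case Pa: (P a); case Pb: (P b) => -[wa wb]; try by [case: wa | case: wb].
  apply: (HC a b) => // -[v [Lv [va vb]]]; apply: nab; exists (restr P v).
  by rewrite /occurs !restrE Pa Pb; split; first exact: LL1.
- move=> a; have [v [Lv va]] := HN a; exists (restr P v); split; first exact: LL1.
  by rewrite !restrE va.
- move=> X HX.
  have PX v : L v -> exists2 a, a \in [set x in X | P x] & occurs a v.
    move=> Lv; have [a aX] := HX _ (LL1 v Lv); rewrite /occurs restrE.
    by case: ifP => // Pa va; exists a; rewrite // inE aX Pa.
  have [a] := HP _ PX; rewrite inE => /andP[aX Pa] wa.
  by exists a; rewrite // /occurs restrE Pa.
- move=> a b Kab; rewrite !restrE; case Pb: (P b) => //; case Pa: (P a).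
    by apply: (HK a b) => v /LL1 /Kab; rewrite !restrE Pa Pb.
  have [v [Lv <-]] := HN b.
  by move: (Kab _ (LL1 v Lv)); rewrite !restrE Pa Pb leqn0 => /eqP ->.
Qed.

Lemma characterized_conc P {L1 L2} :
  supported P L1 -> supported (predC P) L2 ->
  characterized L1 -> characterized L2 -> characterized (L_conc L1 L2).
Proof.
move=> sL1 sL2 cL1 cL2 w mw; apply/(L_conc_restr w sL1 sL2).
have split_conc v : L_conc L1 L2 v -> L1 (restr P v) /\ L2 (restr (predC P) v).
  exact: (L_conc_restr v sL1 sL2).1.
by split; [apply: cL1|apply: cL2]; apply: models_Delta_restr mw => v /split_conc [].
Qed.

Definition syms (A : atom S) : seq S := [seq q.1 | q <- A].
Definition csyms (C : clause S) : seq S := flatten [seq syms p.1 | p <- C].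

Lemma mem_syms {A r} : List.In r A -> r.1 \in syms A.
Proof. by elim: A => //= q A IHA [->|/IHA rA]; rewrite in_cons ?eqxx ?rA ?orbT. Qed.

Lemma symsP {A x} : x \in syms A -> exists2 r, List.In r A & r.1 = x.
Proof.
elim: A => //= q A IHA; rewrite in_cons => /orP[/eqP ->|/IHA [r rA <-]].
  by exists q; first left.
by exists r; first right.
Qed.

Lemma mem_csyms {C p x} : List.In p C -> x \in syms p.1 -> x \in csyms C.
Proof. by elim: C => //= q C IHC [->|/IHC px] xp; rewrite mem_cat ?xp ?px ?orbT. Qed.

Lemma uniq_csyms_syms {C p} : uniq (csyms C) -> List.In p C -> uniq (syms p.1).
Proof.
elim: C => //= q C IHC; rewrite /csyms /= cat_uniq => /and3P[uq _ uC] [<-|pC] //.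
exact: IHC.
Qed.

Lemma csyms_uniq_atom {C p q x} :
  uniq (csyms C) -> List.In p C -> List.In q C ->
  x \in syms p.1 -> x \in syms q.1 -> p = q.
Proof.
elim: C => //= r C IHC; rewrite /csyms /= cat_uniq => /and3P[_ rCdisj uC].
have notin_rest s : List.In s C -> x \in syms s.1 -> x \notin syms r.1.
  by move=> sC xs; apply: (hasPn rCdisj); exact: mem_csyms sC xs.
move=> [<-|pC] [<-|qC] xp xq //; last exact: IHC.
- by move: (notin_rest q qC xq); rewrite xp.
- by move: (notin_rest p pC xp); rewrite xq.
Qed.

Lemma supported_sym a : supported (pred1 a) (L_sym a).
Proof. by move=> w -> b /= /negbTE ba; rewrite ffunE ba. Qed.

Lemma supported_atom A : supported [in syms A] (L_atom A).
Proof.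
elim: A => [|p A IHA] /=; first exact: supported_eps.
apply: supported_conc.
  apply: (supported_sub (supported_rep p.2 (supported_sym p.1))) => x /eqP ->.
  by rewrite /= in_cons eqxx.
by apply: (supported_sub IHA) => x; rewrite /= in_cons => ->; rewrite orbT.
Qed.

Lemma supported_clause C : supported [in csyms C] (L_clause C).
Proof.
elim: C => [|p C IHC] /=; first by move=> w [].
move=> w [pw|Cw] a; rewrite /= /csyms /= mem_cat negb_or => /andP[ap aC].
  exact: (supported_rep p.2 (supported_atom p.1) w pw).
exact: IHC.
Qed.

Lemma supported_dime E : supported [in dime_symbols E] (L_dime E).
Proof.
elim: E => [|D E IHE] /=; first exact: supported_eps.
apply: supported_conc.
  apply: supported_rep; apply: (supported_sub (supported_clause D.1)) => x /= xD.
  by rewrite /dime_symbols /= mem_cat xD.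
by apply: (supported_sub IHE) => x /= xE; rewrite /dime_symbols /= mem_cat xE orbT.
Qed.

Definition atom_pow A i v :=
  (forall a, a \notin syms A -> v a = 0) /\
  (forall r, List.In r A -> v r.1 <= i /\ (r.2 = m_one -> v r.1 = i)).

Lemma atom_pow_cons {p A} i u : p.1 \notin syms A ->
  atom_pow (p :: A) i u <->
  (u p.1 <= i /\ (p.2 = m_one -> u p.1 = i)) /\
  atom_pow A i (restr (predC (pred1 p.1)) u).
Proof.
move=> pA; have restrA r : List.In r A -> restr (predC (pred1 p.1)) u r.1 = u r.1.
  by move=> rA; rewrite restrE /=; case: eqP => // rp; case/negP: pA; rewrite -rp mem_syms.
split.
  move=> [out_u in_u]; split; first exact: in_u p (or_introl erefl).
  split=> [a aA|r rA]; last by rewrite restrA //; apply: in_u; right.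
  rewrite restrE /=; case: eqP => //= /eqP ap; apply: out_u.
  by rewrite /= in_cons negb_or ap.
move=> [up [out_u in_u]]; split=> [a|r [<-|rA]] //.
  rewrite /= in_cons negb_or => /andP[ap aA].
  by move: (out_u a aA); rewrite restrE /= ap.
by rewrite -restrA //; apply: in_u.
Qed.

Lemma L_rep_sym_restr a I u : I = m_opt \/ I = m_one ->
  L_rep (L_sym a) I (restr (pred1 a) u) <-> u a <= 1 /\ (I = m_one -> u a = 1).
Proof.
have restr_at v : restr (pred1 a) u = v -> u a = v a.
  by move=> <-; rewrite restrE /= eqxx.
have restr_eq v : (forall b, b != a -> v b = 0) -> u a = v a -> restr (pred1 a) u = v.
  move=> va uva; apply/ffunP => b; rewrite restrE /=.
  by case: eqP => [->|/eqP ba] //; rewrite va.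
case=> ->; [rewrite L_rep_opt|rewrite L_rep_one]; rewrite /L_sym; split.
- by case=> /restr_at ->; rewrite ?epsE ?ffunE ?eqxx; split=> //; case.
- case=> ua _; have [ua0|ua1] : u a = 0 \/ u a = 1 by lia.
    by left; apply: restr_eq => [b _|]; rewrite epsE.
  by right; apply: restr_eq => [b /negbTE ba|]; rewrite ffunE ?ba ?eqxx.
- by move/restr_at ->; rewrite ffunE eqxx.
- by case=> _ /(_ erefl) ua; apply: restr_eq => [b /negbTE ba|]; rewrite ffunE ?ba ?eqxx.
Qed.

Lemma L_atomE A u : opt_or_one A -> uniq (syms A) -> L_atom A u <-> atom_pow A 1 u.
Proof.
elim: A u => [|p A IHA] u okA /=.
  move=> _; split=> [->|[out_u _]]; first by split=> // a _; rewrite epsE.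
  by apply/ffunP => a; rewrite epsE out_u.
case/andP => pA uA.
have sA : supported (predC (pred1 p.1)) (L_atom A).
  by apply: (supported_sub (supported_atom A)) => x /= xA; apply: contraNneq pA => <-.
rewrite (L_conc_restr u (supported_rep p.2 (supported_sym p.1)) sA).
rewrite (atom_pow_cons 1 u pA) L_rep_sym_restr ?IHA //.
- by move=> r rA; apply: okA; right.
- by apply: okA; left.
Qed.

Lemma atom_pow_uconc A i j u v :
  atom_pow A i u -> atom_pow A j v -> atom_pow A (i + j) (uconc u v).
Proof.
move=> [out_u in_u] [out_v in_v]; split=> [a aA|r rA]; first by rewrite uconcE out_u ?out_v.
have [ui ui_eq] := in_u r rA; have [vj vj_eq] := in_v r rA.
by rewrite uconcE leq_add //; split=> // r1; rewrite ui_eq ?vj_eq.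
Qed.

Lemma atom_pow0 A v : atom_pow A 0 v <-> v = eps S.
Proof.
split=> [[out_v in_v]|->]; last by split=> [a _|r _]; rewrite epsE.
apply/ffunP => a; rewrite epsE; case: (boolP (a \in syms A)) => [/symsP [r rA <-]|/out_v //].
by apply/eqP; rewrite -leqn0; case: (in_v r rA).
Qed.

Lemma L_pow_atomE {A i v} : opt_or_one A -> uniq (syms A) ->
  L_pow (L_atom A) i v <-> atom_pow A i v.
Proof.
move=> okA uA; elim: i v => [|i IHi] v /=; first by rewrite atom_pow0.
split=> [[v1 [v2 [Av1 [Av2 ->]]]]|[out_v in_v]].
  by rewrite -add1n; apply: atom_pow_uconc; [apply/L_atomE|apply/IHi].
(* One copy of A: each symbol of A that still occurs in v, once. *)
pose top : word S := [ffun b => nat_of_bool ((b \in syms A) && (0 < v b))].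
exists top, [ffun b => v b - top b]; split; last split.
- apply/L_atomE => //; split=> [a /negbTE aA|r rA]; first by rewrite ffunE aA.
  rewrite ffunE mem_syms //=; split; first by case: (0 < v r.1).
  by move=> /(proj2 (in_v r rA)) ->.
- apply/IHi; split=> [a aA|r rA]; first by rewrite !ffunE out_v.
  have [vr vr_eq] := in_v r rA; rewrite !ffunE mem_syms //=.
  split=> [|/vr_eq ->]; case: (ltnP 0 (v r.1)) => /=; lia.
- by apply/ffunP => b; rewrite uconcE !ffunE; case: (b \in syms A); case: ltnP => /=; lia.
Qed.

Lemma L_rep_atomE {A I v} : opt_or_one A -> uniq (syms A) ->
  L_rep (L_atom A) I v <-> exists2 i, irange I i & atom_pow A i v.
Proof.
move=> okA uA; rewrite L_repE.
by split=> -[i Ii Av]; exists i => //; apply/(L_pow_atomE okA uA).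
Qed.

Definition mandatory_max A v :=
  forall q x, List.In q A -> q.2 = m_one -> x \in syms A -> v x <= v q.1.

Lemma atom_pow_mandatory_max {A i v} : atom_pow A i v -> mandatory_max A v.
Proof.
move=> [_ in_v] q x qA q1 /symsP [r rA <-].
by rewrite (proj2 (in_v q qA) q1); apply: (in_v r rA).1.
Qed.

Lemma mandatory_max_eps A : mandatory_max A (eps S).
Proof. by move=> q x _ _ _; rewrite !epsE. Qed.

Lemma mandatory_max_uconc A u v :
  mandatory_max A u -> mandatory_max A v -> mandatory_max A (uconc u v).
Proof. by move=> uA vA q x qA q1 xA; rewrite !uconcE leq_add ?uA ?vA. Qed.

Lemma exists_max_sym {A w a} : a \in syms A -> mandatory_max A w ->
  exists2 r, List.In r A &
    (forall y, y \in syms A -> w y <= w r.1) /\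
    ((exists2 q, List.In q A & q.2 = m_one) -> r.2 = m_one).
Proof.
move=> aA wA; case: (classic (exists2 q, List.In q A & q.2 = m_one)) => [[q qA q1]|no1].
  by exists q => //; split=> // y; apply: wA.
case: (@arg_maxnP _ a [in syms A] w aA) => x /symsP [r rA <-] rmax.
by exists r => //; split=> // y /rmax.
Qed.

Lemma L_clauseP C v :
  L_clause C v <-> exists2 p, List.In p C & L_rep (L_atom p.1) p.2 v.
Proof.
elim: C => [|p C IHC] /=; first by split=> // -[].
rewrite /L_union IHC; split=> [[pv|[q qC qv]]|[q [<-|qC] qv]].
- by exists p; first left.
- by exists q; first right.
- by left.
- by right; exists q.
Qed.

Section Clause.
Variable C : clause S.
Hypothesis C_ok : forall p, List.In p C -> opt_or_one p.1.
Hypothesis C_uniq : uniq (csyms C).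

Lemma L_clause_atom {v c} : L_clause C v -> occurs c v ->
  exists p, [/\ List.In p C, c \in syms p.1 & exists2 i, irange p.2 i & atom_pow p.1 i v].
Proof.
case/L_clauseP => p pC /(L_rep_atomE (C_ok _ pC) (uniq_csyms_syms C_uniq pC)) [i Ii Av] cv.
exists p; split=> //; last by exists i.
by apply: contraPT cv => /(proj1 Av) vc0; apply.
Qed.

Lemma L_clause_mandatory_max {v p} :
  L_clause C v -> List.In p C -> mandatory_max p.1 v.
Proof.
move=> Cv pC q x qp q1 xp; case: (eqVneq (v x) 0) => [->//|/eqP vx].
have [p' [p'C xp' [i _ Av]]] := L_clause_atom Cv vx.
have pp' := csyms_uniq_atom C_uniq pC p'C xp xp'; subst p'.
exact: atom_pow_mandatory_max Av q x qp q1 xp.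
Qed.

Lemma L_pow_clause_mandatory_max {n v p} :
  L_pow (L_clause C) n v -> List.In p C -> mandatory_max p.1 v.
Proof.
elim: n v => [|n IHn] v /=; first by move=> -> _; apply: mandatory_max_eps.
move=> [v1 [v2 [Cv1 [Cv2 ->]]]] pC.
by apply: mandatory_max_uconc; [apply: L_clause_mandatory_max Cv1 pC|apply: IHn].
Qed.

Section Models.
Variables (L : lang S) (w : word S).
Hypothesis sub_clause : forall v, L v -> v = eps S \/ L_clause C v.
Hypothesis w_models : models w (Delta L).

Lemma L_occurs_atom {v c} : L v -> occurs c v ->
  exists p, [/\ List.In p C, c \in syms p.1 & exists2 i, irange p.2 i & atom_pow p.1 i v].
Proof.
move=> /sub_clause [-> cv|Cv]; last exact: L_clause_atom.
by case: cv; rewrite epsE.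
Qed.

(* A word of L containing a symbol of the atom p contains no symbol outside
   p, so the conflicts recorded in Delta confine w to p. *)
Lemma models_supported_atom {p a} : List.In p C -> a \in syms p.1 -> occurs a w ->
  forall c, c \notin syms p.1 -> w c = 0.
Proof.
move=> pC ap wa c cp; case: (eqVneq (w c) 0) => // /eqP wc.
have [HC _ _ _] := w_models; case: (HC a c) => // -[v [Lv [va vc]]].
have [p' [p'C ap' [i _ Av]]] := L_occurs_atom Lv va.
have pp' := csyms_uniq_atom C_uniq pC p'C ap ap'; subst p'.
exact: vc (proj1 Av c cp).
Qed.

Lemma models_mandatory_max {p} : List.In p C -> mandatory_max p.1 w.
Proof.
move=> pC q x qp q1 xp; have [_ _ _ HK] := w_models.
apply: HK => v /sub_clause [->|Cv]; first by rewrite !epsE.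
exact: L_clause_mandatory_max Cv pC q x qp q1 xp.
Qed.

(* The exponent is read off a word of L that agrees with w on a maximal symbol
   of p, chosen mandatory whenever p has a mandatory symbol. *)
Lemma models_atom_pow {p a} : List.In p C -> a \in syms p.1 -> occurs a w ->
  exists2 i, irange p.2 i & atom_pow p.1 i w.
Proof.
move=> pC ap wa; have wp := models_mandatory_max pC.
have [r rp [rmax rone]] := exists_max_sym ap wp.
have [_ HN _ _] := w_models; have [v [Lv vr]] := HN r.1.
have vr0 : occurs r.1 v by move: (rmax a ap) wa; rewrite /occurs vr; lia.
have [p' [p'C rp' [i Ii Av]]] := L_occurs_atom Lv vr0.
have pp' := csyms_uniq_atom C_uniq pC p'C (mem_syms rp) rp'; subst p'.
have [vr_le vr_eq] := proj2 Av r rp.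
exists i => //; split=> [|q qp]; first exact: models_supported_atom pC ap wa.
have wq_le : w q.1 <= i by apply: leq_trans (rmax _ (mem_syms qp)) _; rewrite -vr.
split=> // q1; apply/eqP; rewrite eqn_leq wq_le /=.
have -> : i = w r.1 by rewrite -vr vr_eq // rone //; exists q.
exact: wp q r.1 qp q1 (mem_syms rp).
Qed.
End Models.

Lemma characterized_clause L :
  (forall v, L_clause C v -> L v) -> (forall v, L v -> v = eps S \/ L_clause C v) ->
  characterized L.
Proof.
move=> clause_sub sub_clause w mw.
case: (eqVneq w (eps S)) mw => [->|/word_neq_eps [a wa]] mw; first exact: models_Delta_eps.
have [_ HN _ _] := mw; have [v [Lv va]] := HN a.
have va0 : occurs a v by rewrite /occurs va.
have [p [pC ap _]] := L_occurs_atom _ sub_clause Lv va0.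
apply: clause_sub; apply/L_clauseP; exists p => //.
apply/(L_rep_atomE (C_ok _ pC) (uniq_csyms_syms C_uniq pC)).
exact: (models_atom_pow _ _ sub_clause mw pC ap wa).
Qed.
End Clause.

Lemma L_pow_atom_restr {A w} : opt_or_one A -> uniq (syms A) -> mandatory_max A w ->
  L_pow (L_atom A) (\max_(x <- syms A) w x) (restr [in syms A] w).
Proof.
move=> okA uA wA; apply/L_pow_atomE => //; split=> [a /negbTE aA|r rA].
  by rewrite restrE /= aA.
rewrite restrE /= mem_syms //; split=> [|r1]; first exact: leq_bigmax_seq (mem_syms rA) _.
apply/eqP; rewrite eqn_leq leq_bigmax_seq ?mem_syms //=.
by apply/bigmax_leqP_seq => x xA _; apply: wA r x rA r1 xA.
Qed.

Lemma L_pow_simple_clause C w :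
  opt_or_one C -> (forall p, List.In p C -> opt_or_one p.1) -> uniq (csyms C) ->
  (forall a, a \notin csyms C -> w a = 0) ->
  (forall p, List.In p C -> mandatory_max p.1 w) ->
  exists n, L_pow (L_clause C) n w.
Proof.
elim: C w => [|p C IHC] w simpleC okC uC out_w wC.
  by exists 0; apply/ffunP => a; rewrite epsE out_w.
move: uC; rewrite /csyms /= cat_uniq => /and3P [up disj uC].
have notin_p x : x \in csyms C -> x \in syms p.1 = false.
  by move=> xC; apply/negbTE; apply: (hasPn disj).
have [n Cn] : exists n, L_pow (L_clause C) n (restr (predC [in syms p.1]) w).
  apply: IHC => // [q qC|q qC|a aC|q qC r x rq r1 xq].
  - by apply: simpleC; right.
  - by apply: okC; right.
  - rewrite restrE /=; case: ifP => // ap; apply: out_w.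
    by rewrite /csyms /= mem_cat negb_or ap.
  - rewrite !restrE /= !notin_p ?(mem_csyms qC) ?mem_syms //.
    by apply: (wC q) => //; right.
have p_max : mandatory_max p.1 w by apply: wC; left.
have pow_p : L_pow (L_clause (p :: C)) (\max_(x <- syms p.1) w x) (restr [in syms p.1] w).
  apply: (sub_L_pow _ (L_pow_atom_restr (okC p (or_introl erefl)) up p_max)) => v pv.
  left; case: (simpleC p (or_introl erefl)) => ->; first by apply/L_rep_opt; right.
  exact/L_rep_one.
have pow_C : L_pow (L_clause (p :: C)) n (restr (predC [in syms p.1]) w).
  by apply: (sub_L_pow _ Cn) => v Cv; right.
by have := L_pow_add pow_p pow_C; rewrite uconc_restrC; exists (\max_(x <- syms p.1) w x + n).
Qed.

Lemma characterized_star {C I} :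
  opt_or_one C -> (forall p, List.In p C -> opt_or_one p.1) -> uniq (csyms C) ->
  I = m_plus \/ I = m_star -> characterized (L_rep (L_clause C) I).
Proof.
move=> simpleC okC uC I_pl w mw; have [_ HN _ HK] := mw.
case: (eqVneq w (eps S)) mw => [->|wN0] mw; first exact: models_Delta_eps.
have [n Cn] : exists n, L_pow (L_clause C) n w.
  apply: L_pow_simple_clause => // [a aC|p pC q x qp q1 xp].
    by have [v [Iv <-]] := HN a; apply: (supported_rep I (supported_clause C) v Iv).
  apply: HK => v /L_repE [i _ Cv].
  exact: (L_pow_clause_mandatory_max _ okC uC Cv pC q x qp q1 xp).
apply/L_repE; exists n => //; left.
case: n Cn => [w0|n _]; first by rewrite w0 eqxx in wN0.
by case: I_pl => ->.
Qed.

Lemma is_clause_atoms {C} : is_clause C -> forall p, List.In p C -> opt_or_one p.1.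
Proof. by move=> [_ C_ok] p /C_ok [[_ okp] _]. Qed.

Definition dime_factor (D : clause S * interval) :=
  (is_simple_clause D.1 /\ (D.2 = m_plus \/ D.2 = m_star)) \/
  (is_clause D.1 /\ (D.2 = m_one \/ D.2 = m_opt)).

Lemma characterized_factor D :
  uniq (csyms D.1) -> dime_factor D -> characterized (L_rep (L_clause D.1) D.2).
Proof.
move=> uD [[[cD simpleD] I_D]|[cD I_D]].
  exact: characterized_star simpleD (is_clause_atoms cD) uD I_D.
case: I_D => ->; apply: (characterized_clause _ (is_clause_atoms cD) uD) => v.
- by move/L_rep_one.
- by move/L_rep_one; right.
- by move=> Cv; apply/L_rep_opt; right.
- by move/L_rep_opt.
Qed.

Lemma characterized_dime E :
  (forall D, List.In D E -> dime_factor D) -> uniq (dime_symbols E) ->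
  characterized (L_dime E).
Proof.
elim: E => [|D E IHE] okE /=.
  by move=> _ w [_ HN _ _]; apply/ffunP => a; have [v [-> <-]] := HN a.
rewrite /dime_symbols /= cat_uniq => /and3P[uD disj uE].
apply: (characterized_conc [in csyms D.1]).
- exact: supported_rep (supported_clause D.1).
- by apply: (supported_sub (supported_dime E)) => a aE /=; apply: (hasPn disj).
- exact: characterized_factor uD (okE D (or_introl erefl)).
- by apply: IHE => // D' D'E; apply: okE; right.
Qed.
End Characterization.

Theorem lemma1 (Sigma : finType) (E : dime Sigma) (w : word Sigma) :
  is_dime E -> (L_dime E w <-> models w (Delta (L_dime E))).
Proof.
move=> [_ okE uE]; split; first exact: models_Delta.
exact: characterized_dime okE uE w.
Qed.
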